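(* Let $\alpha\in\mathbb{N}=\{0,1,2,\dots\}$. (i) If $m$ is a positive odd integer with $m>6\alpha+2$ and $\mathbb{S}=\langle 6,6\alpha+2,m\rangle$, then $Betti(\mathbb{S})=\{18\alpha+6,\,2m\}$. (ii) If $n\in\mathbb{N}$ with $3\nmid n$ and $n>6\alpha+3$ and $\mathbb{S}=\langle 6,6\alpha+3,n\rangle$, then $Betti(\mathbb{S})=\{12\alpha+6,\,3n\}$. (iii) If $p$ is a positive odd integer with $p>6\alpha+4$ and $\mathbb{S}=\langle 6,6\alpha+4,p\rangle$, then $Betti(\mathbb{S})=\{18\alpha+12,\,2p\}$.
   Context: $\mathbb{N}$ denotes the set of nonnegative integers. For positive integers $a_1,\dots,a_e$ with $\gcd=1$, $\langle a_1,\dots,a_e\rangle=\{\lambda_1a_1+\dots+\lambda_ea_e:\lambda_i\in\mathbb{N}\}$. For $a\in\mathbb{S}$, $Z(a)=\{(\eta_1,\dots,\eta_e)\in\mathbb{N}^e:\sum\eta_ia_i=a\}$. For $x,y\in\mathbb{N}^e$, $\gcd\{x,y\}$ is the componentwise minimum. For $a\in\mathbb{S}\setminus\{0\}$, $\nabla_a$ is the graph with vertex set $Z(a)$, with $x,y$ adjacent iff $\gcd\{x,y\}\neq0$; $a$ is a Betti element if $\nabla_a$ is disconnected, and $Betti(\mathbb{S})$ is the set of Betti elements. *)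

From mathcomp Require Import all_boot.
From Stdlib Require Import Relation_Operators.
Set Implicit Arguments. Unset Strict Implicit. Unset Printing Implicit Defensive.

(* The semigroup S = <a_1,...,a_e> is represented by its list of generators A. *)

Definition is_fact (A : seq nat) (a : nat) (x : seq nat) : Prop :=
  size x = size A /\ sumn [seq p.1 * p.2 | p <- zip x A] = a.

Definition in_sgp (A : seq nat) (a : nat) : Prop := exists x, is_fact A a x.

Definition gcdv (x y : seq nat) : seq nat := [seq minn p.1 p.2 | p <- zip x y].

Definition adj (x y : seq nat) : Prop := has (fun k => k != 0) (gcdv x y).

Definition nabla_edge (A : seq nat) (a : nat) (x y : seq nat) : Prop :=
  is_fact A a x /\ is_fact A a y /\ adj x y.

Definition nabla_connected (A : seq nat) (a : nat) : Prop :=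
  forall x y, is_fact A a x -> is_fact A a y ->
    clos_refl_trans (seq nat) (nabla_edge A a) x y.

Definition is_betti (A : seq nat) (a : nat) : Prop :=
  in_sgp A a /\ a <> 0 /\ ~ nabla_connected A a.

From mathcomp Require Import all_boot zify.
From Stdlib Require Import Relation_Operators.

Set Implicit Arguments. Unset Strict Implicit. Unset Printing Implicit Defensive.

(* Each of the three semigroups is <d e, d f, q> with e, f coprime, d, q
   coprime and (e - 1) f < q.  It has two minimal relations:
   f (d e) = e (d f), and d q = x0 (d e) + y0 (d f), which exists because
   q, being larger than the Frobenius number of <e, f>, lies in <e, f>.
   Since d divides the q-coordinate of every factorization (d is coprime to
   q), any factorization of any other element can be walked down by the second
   relation to one without q, and two factorizations without q are joined
   through the first relation.  At e (d f) and d q, the factorizations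
   (0, e, 0) and (0, 0, d) share a generator with no other factorization. *)

Lemma gcdvC x y : gcdv x y = gcdv y x.
Proof. by rewrite /gcdv; elim: x y => [|x0 x IH] [|y0 y] //=; rewrite minnC IH. Qed.

Lemma nabla_edge_sym A b u v : nabla_edge A b u v -> nabla_edge A b v u.
Proof. by case=> fu [fv adj_uv]; split=> //; split=> //; rewrite /adj gcdvC. Qed.

Lemma nabla_path_sym A b u v :
  clos_refl_trans _ (nabla_edge A b) u v -> clos_refl_trans _ (nabla_edge A b) v u.
Proof.
elim=> [s t /nabla_edge_sym st | s | s t r _ ts _ rt]; first exact: rt_step.
- exact: rt_refl.
- exact: rt_trans rt ts.
Qed.

Lemma nabla_path_edge A b u v : is_fact A b u -> is_fact A b v -> adj u v ->
  clos_refl_trans _ (nabla_edge A b) u v.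
Proof. by move=> fu fv adj_uv; apply: rt_step. Qed.

Lemma isolated_not_connected A b u v : is_fact A b u -> is_fact A b v -> u <> v ->
  (forall w, is_fact A b w -> adj u w -> w = u) -> ~ nabla_connected A b.
Proof.
move=> fu fv neq_uv isolated_u connected.
suff from_u s t : clos_refl_trans _ (nabla_edge A b) s t -> s = u -> t = u.
  by apply: neq_uv; rewrite (from_u u v (connected u v fu fv)).
elim=> [s0 t0 [_ [ft0 adj_st]] s0u | // | s0 t0 r0 _ IH1 _ IH2 /IH1].
- by subst; exact: isolated_u.
- exact: IH2.
Qed.

Lemma is_fact3 a c q b x y z :
  is_fact [:: a; c; q] b [:: x; y; z] <-> x * a + y * c + z * q = b.
Proof. rewrite /is_fact /=; split=> [[_ <-]|<-]; [lia | split=> //; lia]. Qed.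

Lemma is_fact3P a c q b w : is_fact [:: a; c; q] b w ->
  exists x y z, w = [:: x; y; z] /\ x * a + y * c + z * q = b.
Proof.
case: w => [|x [|y [|z [|? ?]]]] [//= _ E].
by exists x, y, z; split=> //; apply/is_fact3.
Qed.

Lemma adj3 x y z x' y' z' : adj [:: x; y; z] [:: x'; y'; z'] <->
  (0 < x /\ 0 < x') \/ (0 < y /\ 0 < y') \/ (0 < z /\ 0 < z').
Proof. rewrite /adj /gcdv /=; split; lia. Qed.

Lemma coprime_nat_combination p h n : 0 < p -> 0 < h -> coprime p h ->
  p.-1 * h <= n -> exists x y, n = x * p + y * h.
Proof.
move=> p_gt0 h_gt0 co_ph le_n.
have [u v def_uh _] := egcdnP p h_gt0.
rewrite gcdnC (eqP co_ph) in def_uh.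
pose j := (n * u) %% p.
have j_le : j * h <= n.
  by apply: leq_trans le_n; rewrite leq_mul2r -ltnS prednK // ltn_pmod ?orbT.
have jh_mod : j * h = n %[mod p].
  by rewrite modnMml -mulnA def_uh mulnDr muln1 mulnA modnMDl.
exists ((n - j * h) %/ p), j.
by rewrite divnK ?subnK // -eqn_mod_dvd // jh_mod.
Qed.

Section TwoMinimalRelations.

Variables d e f q : nat.
Hypotheses (d_gt0 : 0 < d) (e_gt0 : 0 < e) (f_gt0 : 0 < f).
Hypotheses (coprime_ef : coprime e f) (coprime_dq : coprime d q).
Hypothesis q_large : e.-1 * f < q.

Local Notation a := (d * e).
Local Notation c := (d * f).
Local Notation S := [:: a; c; q].
Local Notation linked b := (clos_refl_trans (seq nat) (nabla_edge S b)).

Lemma rel_ac : f * a = e * c.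
Proof. lia. Qed.

Lemma rel_ac_min x y : 0 < x -> x * a = y * c -> e <= y.
Proof.
move=> x_gt0 E.
have {}E : x * e = y * f by apply/eqP; rewrite -(eqn_pmul2l d_gt0); lia.
have y_gt0 : 0 < y by nia.
by apply: dvdn_leq y_gt0 _; rewrite -(Gauss_dvdl _ coprime_ef) -E dvdn_mull.
Qed.

Lemma dvdn_q_coord x y z x' y' :
  x * a + y * c + z * q = x' * a + y' * c -> d %| z.
Proof.
move=> E; rewrite -(Gauss_dvdl _ coprime_dq).
have dvd_ac u v : d %| u * a + v * c by rewrite dvdn_add // mulnCA dvdn_mulr.
by rewrite -(dvdn_addr _ (dvd_ac x y)) E.
Qed.

Lemma rel_q : exists x0 y0, d * q = x0 * a + y0 * c.
Proof.
have [x [y ->]] := coprime_nat_combination e_gt0 f_gt0 coprime_ef (ltnW q_large).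
by exists x, y; lia.
Qed.

Lemma ec_lt : e * c < c + d * q.
Proof. by rewrite -{1}(prednK e_gt0) mulSn ltn_add2l mulnCA ltn_pmul2l. Qed.

Lemma linked_c_a b x y : 0 < b -> b <> e * c -> x * a = b -> y * c = b ->
  linked b [:: 0; y; 0] [:: x; 0; 0].
Proof.
move=> b_gt0 b_ne Ex Ey.
have x_gt0 : 0 < x by nia.
have e_lt_y : e < y.
  rewrite ltn_neqAle (rel_ac_min x_gt0) ?andbT; last by rewrite Ex Ey.
  by apply/eqP=> ey; apply: b_ne; rewrite ey.
have Emid : f * a + (y - e) * c + 0 * q = b.
  by rewrite mul0n addn0 rel_ac -mulnDl subnKC ?(ltnW e_lt_y).
apply: (@rt_trans _ _ _ [:: f; y - e; 0]); apply: nabla_path_edge.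
- by apply/is_fact3; lia.
- exact/is_fact3.
- by apply/adj3; right; left; rewrite subn_gt0; lia.
- exact/is_fact3.
- by apply/is_fact3; lia.
- by apply/adj3; left.
Qed.

Lemma linked_q_free b x y x' y' : 0 < b -> b <> e * c ->
  x * a + y * c = b -> x' * a + y' * c = b ->
  linked b [:: x; y; 0] [:: x'; y'; 0].
Proof.
move=> b_gt0 b_ne E E'.
have fu : is_fact S b [:: x; y; 0] by apply/is_fact3; lia.
have fv : is_fact S b [:: x'; y'; 0] by apply/is_fact3; lia.
have xy_pos : 0 < x \/ 0 < y by nia.
have xy'_pos : 0 < x' \/ 0 < y' by nia.
have [xx' | [yy' | [[x0 y'0] | [y0 x'0]]]] : (0 < x /\ 0 < x') \/ (0 < y /\ 0 < y') \/
    (x = 0 /\ y' = 0) \/ (y = 0 /\ x' = 0) by lia.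
- by apply: nabla_path_edge => //; apply/adj3; left.
- by apply: nabla_path_edge => //; apply/adj3; right; left.
- by subst; apply: linked_c_a => //; lia.
- by subst; apply: nabla_path_sym; apply: linked_c_a => //; lia.
Qed.

Lemma linked_q_pos b : 0 < b -> b <> e * c -> b <> d * q ->
  forall z x y x' y', 0 < z -> x * a + y * c + z * q = b ->
  x' * a + y' * c = b -> linked b [:: x; y; z] [:: x'; y'; 0].
Proof.
move=> b_gt0 b_ne_ec b_ne_dq z; elim/ltn_ind: z => z IH x y x' y' z_gt0 E E'.
have d_le_z : d <= z.
  by apply: dvdn_leq z_gt0 (@dvdn_q_coord x y z x' y' _); lia.
have [x0 [y0 Edq]] := rel_q.
have Estep : (x + x0) * a + (y + y0) * c + (z - d) * q = b.
  have : d * q <= z * q by rewrite leq_mul2r d_le_z orbT.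
  rewrite mulnBl; lia.
have not_dq : ~ (x = 0 /\ y = 0 /\ z = d).
  by case=> x0' [y0' zd]; apply: b_ne_dq; rewrite -E x0' y0' zd.
apply: (@rt_trans _ _ _ [:: x + x0; y + y0; z - d]).
  by apply: nabla_path_edge; [apply/is_fact3; lia | exact/is_fact3 | apply/adj3; lia].
have [zd | zd_gt0] := posnP (z - d).
  by rewrite zd; apply: linked_q_free => //; lia.
by apply: IH => //; lia.
Qed.

Lemma nabla_connected_gens b : 0 < b -> b <> e * c -> b <> d * q -> nabla_connected S b.
Proof.
move=> b_gt0 b_ne_ec b_ne_dq u v.
move=> /is_fact3P [x [y [z [-> E]]]] /is_fact3P [x' [y' [z' [-> E']]]].
have [z0 | z_gt0] := posnP z; have [z'0 | z'_gt0] := posnP z'.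
- by subst; apply: linked_q_free => //; lia.
- by subst; apply: nabla_path_sym; apply: linked_q_pos => //; lia.
- by subst; apply: linked_q_pos => //; lia.
- by apply: nabla_path_edge; [exact/is_fact3 | exact/is_fact3 | apply/adj3; lia].
Qed.

Lemma is_betti_ec : is_betti S (e * c).
Proof.
have fu : is_fact S (e * c) [:: 0; e; 0] by apply/is_fact3; lia.
have fv : is_fact S (e * c) [:: f; 0; 0] by apply/is_fact3; lia.
split; first by exists [:: f; 0; 0].
split; first by apply/eqP; rewrite -lt0n !muln_gt0 e_gt0 d_gt0 f_gt0.
apply: (isolated_not_connected fu fv) => [[f0]|w]; first by lia.
move=> /is_fact3P [x [y [z [-> E]]]] /adj3 adj_w.
have y_gt0 : 0 < y by lia.
have z0 : z = 0.
  apply/eqP; apply: contraT; rewrite -lt0n => z_gt0.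
  have d_le_z : d <= z.
    by apply: dvdn_leq z_gt0 (@dvdn_q_coord x y z 0 e _); lia.
  have : d * q <= z * q by rewrite leq_mul2r d_le_z orbT.
  have := ec_lt; nia.
subst z.
have x0 : x = 0.
  apply/eqP; apply: contraT; rewrite -lt0n => x_gt0.
  have : e <= e - y by apply: (rel_ac_min x_gt0); rewrite mulnBl; lia.
  lia.
subst x.
have : y * c == e * c by apply/eqP; lia.
by rewrite eqn_pmul2r ?muln_gt0 ?d_gt0 // => /eqP ->.
Qed.

Lemma is_betti_dq : is_betti S (d * q).
Proof.
have [x0 [y0 Edq]] := rel_q.
have q_gt0 : 0 < q by lia.
have fu : is_fact S (d * q) [:: 0; 0; d] by apply/is_fact3; lia.
have fv : is_fact S (d * q) [:: x0; y0; 0] by apply/is_fact3; lia.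
split; first by exists [:: 0; 0; d].
split; first by apply/eqP; rewrite -lt0n muln_gt0 d_gt0.
apply: (isolated_not_connected fu fv) => [[_ _ d0]|w]; first by lia.
move=> /is_fact3P [x [y [z [-> E]]]] /adj3 adj_w.
have z_gt0 : 0 < z by lia.
have d_le_z : d <= z.
  by apply: dvdn_leq z_gt0 (@dvdn_q_coord x y z x0 y0 _); lia.
have z_le_d : z <= d by rewrite -(leq_pmul2r q_gt0); lia.
have zd : z = d by lia.
subst z; have : x * a + y * c == 0 by apply/eqP; lia.
rewrite addn_eq0 !muln_eq0 (gtn_eqF d_gt0) (gtn_eqF e_gt0) (gtn_eqF f_gt0) !orbF.
by case/andP=> /eqP -> /eqP ->.
Qed.

Lemma is_betti_gens b : is_betti S b <-> b = e * c \/ b = d * q.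
Proof.
split=> [[_ [b_neq0 not_connected]] | [-> | ->]]; [| exact: is_betti_ec | exact: is_betti_dq].
case: (b =P e * c) => [|b_ne_ec]; first by left.
case: (b =P d * q) => [|b_ne_dq]; first by right.
by case: not_connected; apply: nabla_connected_gens => //; lia.
Qed.

End TwoMinimalRelations.

Theorem theorem4 (alpha : nat) :
  (forall m : nat, 0 < m -> odd m -> 6 * alpha + 2 < m ->
     forall b, is_betti [:: 6; 6 * alpha + 2; m] b <->
               b = 18 * alpha + 6 \/ b = 2 * m) /\
  (forall n : nat, ~~ (3 %| n) -> 6 * alpha + 3 < n ->
     forall b, is_betti [:: 6; 6 * alpha + 3; n] b <->
               b = 12 * alpha + 6 \/ b = 3 * n) /\
  (forall p : nat, 0 < p -> odd p -> 6 * alpha + 4 < p ->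
     forall b, is_betti [:: 6; 6 * alpha + 4; p] b <->
               b = 18 * alpha + 12 \/ b = 2 * p).
Proof.
split; [|split].
- move=> m _ m_odd m_large b.
  have -> : 6 * alpha + 2 = 2 * (3 * alpha + 1) by lia.
  apply: iff_trans (@is_betti_gens 2 3 (3 * alpha + 1) m _ _ _ _ _ _ b) _ => //.
  + lia.
  + by rewrite prime_coprime //; lia.
  + by rewrite coprime2n.
  + lia.
  + split; lia.
- move=> n n_ndvd3 n_large b.
  have -> : 6 * alpha + 3 = 3 * (2 * alpha + 1) by lia.
  apply: iff_trans (@is_betti_gens 3 2 (2 * alpha + 1) n _ _ _ _ _ _ b) _ => //.
  + lia.
  + by rewrite coprime2n oddD oddM.
  + by rewrite prime_coprime.
  + lia.
  + split; lia.
- move=> p _ p_odd p_large b.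
  have -> : 6 * alpha + 4 = 2 * (3 * alpha + 2) by lia.
  apply: iff_trans (@is_betti_gens 2 3 (3 * alpha + 2) p _ _ _ _ _ _ b) _ => //.
  + lia.
  + by rewrite prime_coprime //; lia.
  + by rewrite coprime2n.
  + lia.
  + split; lia.
Qed.
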